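(* Let $m>n>0$ be relatively prime integers with $(m,n)\neq(2,1)$, and $(r,s)\in\mathbb{Z}^2$. Then $(r,s)=\beta(m,n)$ if and only if $(r+s,\,-s)=\beta(m,\,m-n)$.
   Context: For relatively prime integers $a>b>0$, $\beta(a,b)$ denotes the Bézout coefficients given by the Euclidean algorithm: with $a=q_1b+r_1$, $b=q_2r_1+r_2$, $\dots$, $r_{k-2}=q_kr_{k-1}+r_k$, $r_{k-1}=1$, $r_k=0$ ($r_{-1}=a$, $r_0=b$), write $\begin{pmatrix}a\\ b\end{pmatrix}=M\begin{pmatrix}1\\0\end{pmatrix}$ with $M=\prod_{i=1}^k\begin{pmatrix}q_i&1\\1&0\end{pmatrix}$; then $\beta(a,b)$ is the first row of $M^{-1}$, and $\beta(a,b)=(r,s)$ satisfies $ra+sb=1$. *)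

From HB Require Import structures.
From mathcomp Require Import all_boot all_order all_algebra.
Set Implicit Arguments. Unset Strict Implicit. Unset Printing Implicit Defensive.
Import GRing.Theory Num.Theory.
Local Open Scope ring_scope.

(* Quotients q_1, ..., q_k of the Euclidean algorithm on (a, b):
   a = q_1 b + r_1, b = q_2 r_1 + r_2, ..., stopping when the remainder is 0.
   [fuel] bounds the number of steps (b.+1 steps always suffice). *)
Fixpoint euclid_quots (fuel a b : nat) : seq nat :=
  match fuel with
  | O => [::]
  | S f => if b == 0%N then [::] else (a %/ b)%N :: euclid_quots f b (a %% b)%N
  end.

Definition qmx (q : int) : 'M[int]_2 :=
  \matrix_(i < 2, j < 2)
    (if (i == 0) && (j == 0) then q
     else if (i == 1) && (j == 1) then 0 else 1).

Definition euclid_mx (a b : nat) : 'M[int]_2 :=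
  \big[mulmx/1%:M]_(q <- euclid_quots b.+1 a b) qmx q%:Z.

Definition beta (a b : nat) : int * int :=
  let Mi := invmx (euclid_mx a b) in (Mi 0 0, Mi 0 1).

From mathcomp Require Import all_boot all_order all_algebra.
From mathcomp Require Import zify.
Local Open Scope ring_scope.
Import GRing.Theory.

(* With [m = n + d] and [d < n], the quotients of the Euclidean algorithm on
   [(m, n)] are 1 followed by those on [(n, d)], and the quotients on [(m, d)]
   are those on [(n, d)] with the first one increased by 1.  The identity
   [qmx 1 * qmx q = L * qmx (q + 1)] for the involution [L = [[1, 0], [1, -1]]]
   then gives [M(m, m - n) = L M(m, n)], hence [M(m, m - n)^-1 = M(m, n)^-1 L],
   whose first row is [(r + s, -s)].  The case [m - n > n] follows by symmetry,
   and [m - n = n] is exactly the excluded pair [(2, 1)]. *)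

Lemma euclid_quots_fuel (f1 f2 a b : nat) : (b < f1)%N -> (b < f2)%N ->
  euclid_quots f1 a b = euclid_quots f2 a b.
Proof.
elim: f1 f2 a b => [|f1 IH] [|f2] a b //= lt_b_f1 lt_b_f2.
case: eqP => // /eqP b_neq0; congr (_ :: _).
have lt_mod_b : (a %% b < b)%N by rewrite ltn_pmod // lt0n.
by apply: IH; apply: leq_trans lt_mod_b _.
Qed.

Lemma euclid_mx_step (a b : nat) : (0 < b)%N ->
  euclid_mx a b = qmx (a %/ b)%N%:Z *m euclid_mx b (a %% b).
Proof.
move=> b_gt0; rewrite /euclid_mx /= eqn0Ngt b_gt0 big_cons.
by rewrite (@euclid_quots_fuel b (a %% b).+1) // ltn_pmod.
Qed.

Lemma euclid_mx_unit (a b : nat) : euclid_mx a b \in unitmx.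
Proof.
rewrite /euclid_mx; elim: (euclid_quots _ _ _) => [|q l IH].
  by rewrite big_nil unitmx1.
rewrite big_cons unitmx_mul IH andbT.
pose Q' : 'M[int]_2 := \matrix_(i < 2, j < 2)
  (if (i == 0) && (j == 0) then 0 else if (i == 1) && (j == 1) then - q%:Z else 1).
have qmxK : qmx q%:Z *m Q' = 1%:M.
  apply/matrixP => i j; rewrite !mxE !big_ord_recl !big_ord0 !mxE.
  by case: i => [[|[|?]] ?]; case: j => [[|[|?]] ?] //=; lia.
by case: (mulmx1_unit qmxK).
Qed.

Lemma invmx_eq {R : comUnitRingType} {n : nat} {A B : 'M[R]_n} :
  A *m B = 1%:M -> invmx A = B.
Proof.
move=> mulAB; have [uA _] := mulmx1_unit mulAB.
by rewrite -[LHS]mulmx1 -mulAB mulmxA mulVmx // mul1mx.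
Qed.

Lemma invmxM {R : comUnitRingType} {n : nat} (A B : 'M[R]_n) :
  A \in unitmx -> B \in unitmx -> invmx (A *m B) = invmx B *m invmx A.
Proof.
move=> uA uB; apply: invmx_eq.
by rewrite mulmxA -(mulmxA A) mulmxV // mulmx1 mulmxV.
Qed.

Definition flipmx : 'M[int]_2 :=
  \matrix_(i < 2, j < 2) (if j == 0 then 1 else if i == 0 then 0 else -1).

Lemma flipmxK : flipmx *m flipmx = 1%:M.
Proof.
apply/matrixP => i j; rewrite !mxE !big_ord_recl !big_ord0 !mxE.
by case: i => [[|[|?]] ?]; case: j => [[|[|?]] ?] //=; lia.
Qed.

Lemma qmx1_mul (q : nat) : qmx 1 *m qmx q%:Z = flipmx *m qmx q.+1%:Z.
Proof.
apply/matrixP => i j; rewrite !mxE !big_ord_recl !big_ord0 !mxE.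
by case: i => [[|[|?]] ?]; case: j => [[|[|?]] ?] //=; lia.
Qed.

Lemma euclid_mx_addl (n d : nat) : (0 < d < n)%N ->
  euclid_mx (n + d) d = flipmx *m euclid_mx (n + d) n.
Proof.
case/andP=> d_gt0 lt_dn; have n_gt0 : (0 < n)%N by apply: leq_trans lt_dn.
have quot_n : ((n + d) %/ n = 1)%N by rewrite divnDl // divnn n_gt0 divn_small.
have mod_n : ((n + d) %% n = d)%N by rewrite modnDl modn_small.
have quot_d : ((n + d) %/ d = (n %/ d).+1)%N by rewrite divnDr // divnn d_gt0 addn1.
rewrite (euclid_mx_step _ _ n_gt0) quot_n mod_n (euclid_mx_step n _ d_gt0).
rewrite (euclid_mx_step _ _ d_gt0) quot_d modnDr.
by rewrite (mulmxA (qmx _)) qmx1_mul !mulmxA flipmxK mul1mx.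
Qed.

Lemma euclid_mx_subr (m n : nat) : (0 < n < m)%N -> (m - n != n)%N ->
  euclid_mx m (m - n) = flipmx *m euclid_mx m n.
Proof.
case/andP=> n_gt0 lt_nm neq_n.
have d_gt0 : (0 < m - n)%N by rewrite subn_gt0.
have {1 3}-> : m = (n + (m - n))%N by rewrite subnKC // ltnW.
case: ltngtP neq_n => // [lt_dn | lt_nd] _; first by rewrite euclid_mx_addl ?d_gt0.
by rewrite addnC euclid_mx_addl ?n_gt0 // mulmxA flipmxK mul1mx.
Qed.

Lemma beta_subr (m n : nat) : (0 < n < m)%N -> (m - n != n)%N ->
  beta m (m - n) = ((beta m n).1 + (beta m n).2, - (beta m n).2).
Proof.
move=> lt_0nm neq_n; have [flip_unit _] := mulmx1_unit flipmxK.
rewrite /beta euclid_mx_subr // invmxM ?euclid_mx_unit // (invmx_eq flipmxK).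
rewrite !mxE !big_ord_recl !big_ord0 !mxE /=.
have -> : lift ord0 ord0 = 1 :> 'I_2 by apply/val_inj.
by rewrite !mulr1 !mulr0 mulrN1 !addr0 add0r.
Qed.

Theorem lemma2p5 (m n : nat) :
  (0 < n)%N -> (n < m)%N -> coprime m n -> (m, n) <> (2%N, 1%N) ->
  forall r s : int,
    (r, s) = beta m n <-> (r + s, - s) = beta m (m - n).
Proof.
move=> n_gt0 lt_nm co_mn not_21 r s.
have neq_n : (m - n != n)%N.
  apply: contra_notN not_21 => /eqP eq_n.
  have m_double : m = (2 * n)%N by lia.
  move: co_mn; rewrite m_double /coprime gcdnC gcdnMl => /eqP -> //.
rewrite beta_subr ?n_gt0 //; case: (beta m n) => a b /=.
by split=> [[-> ->] | [eq_a eq_b]] //; congr pair; lia.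
Qed.
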